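(* Let $A\in\mathbb Z^{d\times n}$ with $\ker(A)\cap\mathbb N^n=\{0\}$. If a set of moves $B\subseteq\ker(A)$ reduces the distance of the Graver basis $G(A)$, then $B$ is a Markov basis of $A$.
   Context: For $z\in\mathbb Z^n$, $z^\pm\in\mathbb N^n$ are the unique vectors with disjoint supports and $z=z^+-z^-$; $\|\cdot\|$ is the $1$-norm. A Markov basis is a set $B\subseteq\ker(A)$ such that $\{x^{u^+}-x^{u^-}:u\in B\}$ generates the toric ideal $I_A=\langle x^{u^+}-x^{u^-}:u\in\ker(A)\rangle$. The Graver basis $G(A)$ is the set of nonzero $z\in\ker(A)$ admitting no decomposition $z=u+v$ with $u,v\in\ker(A)\setminus\{0\}$, $z^+=u^++v^+$, $z^-=u^-+v^-$. For nonzero $z\in\ker(A)$, $u\in\ker(A)$ reduces the distance of $z$ if there exist $(p,q)\in\{(z^+,z^-),(z^-,z^+)\}$ and $\varepsilon\in\{\pm1\}$ with $p+\varepsilon u\in\mathbb N^n$ and $\|p+\varepsilon u-q\|<\|z\|$; $B$ reduces the distance of $Z$ if every nonzero $z\in Z$ has its distance reduced by some element of $B$. *)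

From HB Require Import structures.
From mathcomp Require Import all_boot all_order all_algebra.
From mathcomp Require Import mpoly.
Set Implicit Arguments. Unset Strict Implicit. Unset Printing Implicit Defensive.
Import Order.TTheory GRing.Theory Num.Theory.
Local Open Scope ring_scope.

Definition inker (d n : nat) (A : 'M[int]_(d, n)) (z : 'cV[int]_n) : Prop :=
  A *m z = 0.

Definition nonneg (n : nat) (z : 'cV[int]_n) : Prop := forall i, 0 <= z i 0.

Definition zpos (n : nat) (z : 'cV[int]_n) : 'cV[int]_n :=
  \col_i Num.max (z i 0) 0.
Definition zneg (n : nat) (z : 'cV[int]_n) : 'cV[int]_n :=
  \col_i Num.max (- z i 0) 0.

Definition norm1 (n : nat) (z : 'cV[int]_n) : int := \sum_i `|z i 0|.

Definition graver (d n : nat) (A : 'M[int]_(d, n)) (z : 'cV[int]_n) : Prop :=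
  [/\ z != 0, inker A z &
   ~ exists u v : 'cV[int]_n,
       [/\ inker A u, inker A v, u != 0, v != 0 &
           [/\ z = u + v, zpos z = zpos u + zpos v & zneg z = zneg u + zneg v]]].

Definition reduces_dist (n : nat) (u z : 'cV[int]_n) : Prop :=
  exists (pq : 'cV[int]_n * 'cV[int]_n) (eps : int),
    [/\ pq = (zpos z, zneg z) \/ pq = (zneg z, zpos z),
        eps = 1 \/ eps = -1,
        nonneg (pq.1 + eps *: u) &
        norm1 (pq.1 + eps *: u - pq.2) < norm1 z].

Definition reduces_dist_set (n : nat) (B Z : 'cV[int]_n -> Prop) : Prop :=
  forall z, Z z -> z != 0 -> exists2 u, B u & reduces_dist u z.

(* monomial x^a for a \in N^n (entries of a are nonnegative integers) *)
Definition monom (k : fieldType) (n : nat) (a : 'cV[int]_n) : {mpoly k[n]} :=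
  'X_[[multinom (absz (a i ord0)) | i < n]].

Definition binom (k : fieldType) (n : nat) (u : 'cV[int]_n) : {mpoly k[n]} :=
  monom k (zpos u) - monom k (zneg u).

Definition ideal_gen (k : fieldType) (n : nat) (S : {mpoly k[n]} -> Prop)
  (p : {mpoly k[n]}) : Prop :=
  exists l : seq ({mpoly k[n]} * {mpoly k[n]}),
    (forall c, c \in l -> S c.2) /\ p = \sum_(c <- l) c.1 * c.2.

Definition toric_ideal (k : fieldType) (d n : nat) (A : 'M[int]_(d, n))
  (p : {mpoly k[n]}) : Prop :=
  ideal_gen (fun f => exists2 u, inker A u & f = binom k u) p.

Definition markov_basis (k : fieldType) (d n : nat) (A : 'M[int]_(d, n))
  (B : 'cV[int]_n -> Prop) : Prop :=
  (forall u, B u -> inker A u) /\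
  forall p : {mpoly k[n]}, toric_ideal A p <-> ideal_gen (fun f => exists2 u, B u & f = binom k u) p.
Arguments markov_basis k [d n] A B.

(* Every binomial x^(v+) - x^(v-) with v in ker A lies in the ideal generated
   by the binomials of B, by induction on the 1-norm of v.  If v is not in the
   Graver basis, it is a conformal sum a + b of nonzero kernel vectors of
   smaller norm, and x^(v+) - x^(v-) = x^(b+) (x^(a+) - x^(a-))
   + x^(a-) (x^(b+) - x^(b-)).  If v is in the Graver basis, some u in B moves
   one side p of v (with q the other side) to w = p +- u >= 0 with
   |w - q| < |v|, and
   x^p - x^q = (x^p - x^w) + (x^w - x^q), where the first term is a monomial
   multiple of the binomial of u and the second one of the binomial of the
   shorter kernel vector w - q. *)

From HB Require Import structures.
From mathcomp Require Import all_boot all_order all_algebra.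
From mathcomp Require Import mpoly.
From mathcomp Require Import zify ring.
From Stdlib Require Import Classical.
Set Implicit Arguments. Unset Strict Implicit. Unset Printing Implicit Defensive.
Import Order.TTheory GRing.Theory Num.Theory.
Local Open Scope ring_scope.

Section IdealGen.
Variables (k : fieldType) (n : nat).
Implicit Types (S T : {mpoly k[n]} -> Prop) (c f p q : {mpoly k[n]}).

Lemma ideal_gen0 S : ideal_gen S 0.
Proof. by exists [::]; rewrite big_nil. Qed.

Lemma ideal_genD S p q : ideal_gen S p -> ideal_gen S q -> ideal_gen S (p + q).
Proof.
move=> [l1 [S_l1 ->]] [l2 [S_l2 ->]]; exists (l1 ++ l2); rewrite big_cat.
by split=> // c; rewrite mem_cat => /orP[/S_l1 | /S_l2].
Qed.

Lemma ideal_genMl S c p : ideal_gen S p -> ideal_gen S (c * p).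
Proof.
move=> [l [S_l ->]]; exists [seq (c * y.1, y.2) | y <- l]; split.
  by move=> y /mapP[x x_l ->] /=; apply: S_l.
by rewrite big_map mulr_sumr; apply: eq_bigr => y _; rewrite mulrA.
Qed.

Lemma ideal_genN S p : ideal_gen S p -> ideal_gen S (- p).
Proof. by rewrite -mulN1r; apply: ideal_genMl. Qed.

Lemma mem_ideal_gen S f : S f -> ideal_gen S f.
Proof.
by move=> Sf; exists [:: (1, f)]; rewrite big_seq1 mul1r; split=> // c /[!inE] /eqP->.
Qed.

Lemma ideal_gen_trans S T p :
  (forall f, S f -> ideal_gen T f) -> ideal_gen S p -> ideal_gen T p.
Proof.
move=> ST [l [S_l ->]]; elim: l S_l => [|c l IHl] S_l.
  by rewrite big_nil; apply: ideal_gen0.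
rewrite big_cons; apply: ideal_genD; first by apply/ideal_genMl/ST/S_l/mem_head.
by apply: IHl => y y_l; apply: S_l; rewrite inE y_l orbT.
Qed.

End IdealGen.

Section Binomials.
Variables (k : fieldType) (n : nat).
Implicit Types (a b p q u v w x : 'cV[int]_n).

Lemma nonneg_zpos x : nonneg (zpos x).
Proof. by move=> i; rewrite mxE; lia. Qed.

Lemma nonneg_zneg x : nonneg (zneg x).
Proof. by move=> i; rewrite mxE; lia. Qed.

Lemma zposBzneg x : zpos x - zneg x = x.
Proof. by apply/matrixP => i j; rewrite !mxE ord1; move: (x i 0) => y; lia. Qed.

Lemma zposN x : zpos (- x) = zneg x.
Proof. by apply/matrixP => i j; rewrite !mxE. Qed.

Lemma znegN x : zneg (- x) = zpos x.
Proof. by apply/matrixP => i j; rewrite !mxE opprK. Qed.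

Lemma norm1_ge0 x : 0 <= norm1 x.
Proof. exact: sumr_ge0. Qed.

Lemma norm1_gt0 x : x != 0 -> 0 < norm1 x.
Proof.
move=> x_neq0; rewrite lt_def norm1_ge0 andbT; apply: contraNN x_neq0.
rewrite psumr_eq0 // => /allP x0; apply/eqP/matrixP => i j.
by rewrite ord1 mxE; apply/eqP; rewrite -normr_eq0; apply: (implyP (x0 i _)).
Qed.

Lemma norm1_ind (P : 'cV[int]_n -> Prop) :
  (forall v, (forall w, norm1 w < norm1 v -> P w) -> P v) -> forall v, P v.
Proof.
move=> IH v; have [N] := ubnP (absz (norm1 v)); elim: N v => // N IHN v ltvN.
apply: IH => w ltwv; apply: IHN.
by have := norm1_ge0 w; have := norm1_ge0 v; lia.
Qed.

Lemma monomD a b : nonneg a -> nonneg b ->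
  monom k (a + b) = monom k a * monom k b.
Proof.
move=> a_ge0 b_ge0; rewrite /monom -mpolyXD; congr 'X_[_]; apply/mnmP => i.
rewrite mnmDE !mnmE !mxE.
by move: (a_ge0 i) (b_ge0 i); case: (a i ord0); case: (b i ord0).
Qed.

Lemma binom0 : binom k (0 : 'cV[int]_n) = 0.
Proof. by rewrite /binom -[in zneg 0]oppr0 znegN subrr. Qed.

Lemma binomN x : binom k (- x) = - binom k x.
Proof. by rewrite /binom zposN znegN opprB. Qed.

Definition colmin p q : 'cV[int]_n := \col_i Num.min (p i 0) (q i 0).

Lemma monomB p q : nonneg p -> nonneg q ->
  monom k p - monom k q = monom k (colmin p q) * binom k (p - q).
Proof.
move=> p_ge0 q_ge0; have min_ge0 : nonneg (colmin p q).
  by move=> i; rewrite mxE; move: (p_ge0 i) (q_ge0 i); lia.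
rewrite /binom mulrBr -!monomD //; try exact: nonneg_zpos; try exact: nonneg_zneg.
congr (monom k _ - monom k _); apply/matrixP => i j; rewrite !mxE ord1;
  by move: (p_ge0 i) (q_ge0 i); move: (p i 0) (q i 0) => x y; lia.
Qed.

Definition conformal_sum v a b :=
  [/\ v = a + b, zpos v = zpos a + zpos b & zneg v = zneg a + zneg b].

Lemma norm1_conformal_sum v a b : conformal_sum v a b ->
  norm1 v = norm1 a + norm1 b.
Proof.
move=> [_ posv negv]; rewrite /norm1 -big_split; apply: eq_bigr => i _ /=.
have /matrixP/(_ i 0) := posv; have /matrixP/(_ i 0) := negv; rewrite !mxE.
by lia.
Qed.

Lemma binom_conformal_sum v a b : conformal_sum v a b ->
  binom k v = monom k (zpos b) * binom k a + monom k (zneg a) * binom k b.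
Proof.
move=> [_ posv negv]; rewrite /binom posv negv !monomD;
  by [ring | exact: nonneg_zpos | exact: nonneg_zneg].
Qed.

Lemma binom_move u v (e : int) : e = 1 \/ e = -1 -> nonneg (zpos v + e *: u) ->
  ideal_gen (fun f => f = binom k u \/ f = binom k (v + e *: u)) (binom k v).
Proof.
set w := zpos v + e *: u => eE w_ge0.
have pw : zpos v - w = - (e *: u) by rewrite opprD addrA subrr add0r.
have wq : w - zneg v = v + e *: u by rewrite addrAC zposBzneg.
have -> : binom k v =
    (monom k (zpos v) - monom k w) + (monom k w - monom k (zneg v)).
  by rewrite /binom addrA subrK.
rewrite [_ - monom k w]monomB ?[monom k w - _]monomB ?pw ?wq //;
  try exact: nonneg_zpos; try exact: nonneg_zneg.
apply: ideal_genD; apply: ideal_genMl; last by apply: mem_ideal_gen; right.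
by case: eE => ->; rewrite ?scale1r ?scaleN1r ?opprK ?binomN;
  do ?apply: ideal_genN; apply: mem_ideal_gen; left.
Qed.

Lemma reduces_dist_binom u v : reduces_dist u v ->
  exists s e : int, norm1 (s *: v + e *: u) < norm1 v /\
    ideal_gen (fun f => f = binom k u \/ f = binom k (s *: v + e *: u))
              (binom k v).
Proof.
move=> [[p q] [e [[[-> ->]|[-> ->]] eE w_ge0 /= ltwq]]]; rewrite addrAC in ltwq.
  exists 1, e; rewrite scale1r zposBzneg in ltwq *.
  by split=> //; apply: binom_move.
exists (-1), e; rewrite scaleN1r.
rewrite -[zneg v]zposN -[zpos v]znegN zposBzneg in ltwq w_ge0.
have -> : binom k v = - binom k (- v) by rewrite binomN opprK.
by split=> //; apply: ideal_genN; apply: binom_move.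
Qed.

End Binomials.

Section MarkovBasis.
Variables (k : fieldType) (d n : nat) (A : 'M[int]_(d, n)).
Variable B : 'cV[int]_n -> Prop.
Hypothesis B_ker : forall u, B u -> inker A u.
Hypothesis B_reduces : reduces_dist_set B (graver A).

Let B_binoms (f : {mpoly k[n]}) := exists2 u, B u & f = binom k u.

Lemma inker_lincomb (s e : int) v u :
  inker A v -> inker A u -> inker A (s *: v + e *: u).
Proof. by rewrite /inker mulmxDr -!scalemxAr => -> ->; rewrite !scaler0 addr0. Qed.

Lemma binom_ker_in_ideal v : inker A v -> ideal_gen B_binoms (binom k v).
Proof.
elim/norm1_ind: v => v IH v_ker.
have [-> | v_neq0] := eqVneq v 0; first by rewrite binom0; apply: ideal_gen0.
have [[a [b [a_ker b_ker a_neq0 b_neq0 vab]]] | v_graver] :=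
  classic (exists a b : 'cV[int]_n, [/\ inker A a, inker A b, a != 0, b != 0 &
                                        conformal_sum v a b]).
  have norm_v := norm1_conformal_sum vab.
  have gt0a := norm1_gt0 a_neq0; have gt0b := norm1_gt0 b_neq0.
  rewrite (binom_conformal_sum k vab).
  by apply: ideal_genD; apply: ideal_genMl; apply: IH => //; rewrite norm_v; lia.
have [u Bu /(reduces_dist_binom k) [s [e [lt_norm v_in]]]] :=
  B_reduces (And3 v_neq0 v_ker v_graver) v_neq0.
apply: ideal_gen_trans v_in => f [-> | ->].
  by apply: mem_ideal_gen; exists u.
by apply: IH => //; apply: inker_lincomb => //; apply: B_ker.
Qed.

End MarkovBasis.

Theorem corollary7p6 (k : fieldType) (d n : nat) (A : 'M[int]_(d, n))
  (B : 'cV[int]_n -> Prop) :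
  (forall z : 'cV[int]_n, inker A z -> nonneg z -> z = 0) ->
  (forall u, B u -> inker A u) ->
  reduces_dist_set B (graver A) ->
  markov_basis k A B.
Proof.
move=> _ B_ker B_reduces; split=> // p; split; apply: ideal_gen_trans.
  by move=> f [u u_ker ->]; apply: (binom_ker_in_ideal k B_ker B_reduces).
by move=> f [u Bu ->]; apply: mem_ideal_gen; exists u; first exact: B_ker.
Qed.
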